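(* Let $\Delta,\Delta'$ be disjoint subsets of a finite alphabet $\Sigma$, and let $L\subseteq\Sigma^\omega$ be an aperiodic language such that each string in $L$ contains exactly one occurrence of a symbol from $\Delta$ and exactly one occurrence of a symbol from $\Delta'$. Then $L$ can be written as a finite union of disjoint languages $R_\ell\, a\, R_m\, b\, R_r$ where $(a,b)\in(\Delta\times\Delta')\cup(\Delta'\times\Delta)$, $R_\ell,R_m\subseteq(\Sigma\setminus(\Delta\cup\Delta'))^*$ and $R_r\subseteq(\Sigma\setminus(\Delta\cup\Delta'))^\omega$. Moreover $R_\ell$, $R_m$ and $R_r$ are aperiodic.
   Context: A finite monoid $M$ is aperiodic if there is $n$ with $x^n=x^{n+1}$ for all $x\in M$. A language $K\subseteq\Sigma^*$ is aperiodic if it is recognized by a morphism $h:\Sigma^*\to M$ to a finite aperiodic monoid (i.e. $K=h^{-1}(h(K))$). For $\omega$-languages: given a morphism $h:\Sigma^*\to M$ to a finite monoid, $\omega$-strings $u,v$ are $h$-similar if they factor as $u=u_1u_2\cdots$, $v=v_1v_2\cdots$ with $u_i,v_i\in\Sigma^+$ and $h(u_i)=h(v_i)$; let $\cong$ be its transitive closure; $h$ recognizes $L\subseteq\Sigma^\omega$ if $w\in L$ and $u\cong w$ imply $u\in L$; $L$ is aperiodic if recognized by a morphism to a finite aperiodic monoid. *)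

From Stdlib Require Import Relations.
From mathcomp Require Import all_boot.
Set Implicit Arguments. Unset Strict Implicit. Unset Printing Implicit Defensive.

Section Defs.
Variable Sigma : finType.

Definition is_monoid (M : Type) (op : M -> M -> M) (e : M) : Prop :=
  associative op /\ left_id e op /\ right_id e op.

Definition mpow (M : Type) (op : M -> M -> M) (e : M) (x : M) (n : nat) : M :=
  iter n (op x) e.

Definition aperiodic_monoid (M : Type) (op : M -> M -> M) (e : M) : Prop :=
  exists n : nat, forall x : M, mpow op e x n = mpow op e x n.+1.

Definition is_morphism (M : Type) (op : M -> M -> M) (e : M)
  (h : seq Sigma -> M) : Prop :=
  h [::] = e /\ forall u v, h (u ++ v) = op (h u) (h v).

Definition recognizes (M : Type) (h : seq Sigma -> M) (K : seq Sigma -> Prop) : Prop :=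
  forall v, K v <-> exists u, K u /\ h u = h v.

Definition aperiodic_lang (K : seq Sigma -> Prop) : Prop :=
  exists (M : finType) (op : M -> M -> M) (e : M) (h : seq Sigma -> M),
    [/\ is_monoid op e, aperiodic_monoid op e, is_morphism op e h & recognizes h K].

Definition factor (u : nat -> Sigma) (p : nat -> nat) (i : nat) : seq Sigma :=
  mkseq (fun k => u (p i + k)) (p i.+1 - p i).

(* u and v are h-similar: u = u_1 u_2 ..., v = v_1 v_2 ... with u_i, v_i
   nonempty and h(u_i) = h(v_i); factorizations given by strictly increasing
   cut points starting at 0 *)
Definition h_similar (M : Type) (h : seq Sigma -> M) (u v : nat -> Sigma) : Prop :=
  exists p q : nat -> nat,
    [/\ p 0 = 0, q 0 = 0, (forall i, p i < p i.+1), (forall i, q i < q i.+1)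
      & forall i, h (factor u p i) = h (factor v q i)].

Definition h_cong (M : Type) (h : seq Sigma -> M) : relation (nat -> Sigma) :=
  clos_trans _ (h_similar h).

Definition recognizes_omega (M : Type) (h : seq Sigma -> M)
  (L : (nat -> Sigma) -> Prop) : Prop :=
  forall w u, L w -> h_cong h u w -> L u.

Definition aperiodic_omega_lang (L : (nat -> Sigma) -> Prop) : Prop :=
  exists (M : finType) (op : M -> M -> M) (e : M) (h : seq Sigma -> M),
    [/\ is_monoid op e, aperiodic_monoid op e, is_morphism op e h
      & recognizes_omega h L].

Definition prepend (x : seq Sigma) (y : nat -> Sigma) : nat -> Sigma :=
  fun n => if n < size x then nth (y 0) x n else y (n - size x).

Definition concat5 (Rl : seq Sigma -> Prop) (a : Sigma) (Rm : seq Sigma -> Prop)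
  (b : Sigma) (Rr : (nat -> Sigma) -> Prop) : (nat -> Sigma) -> Prop :=
  fun w => exists x y z, [/\ Rl x, Rm y, Rr z &
                           forall n, w n = prepend (x ++ a :: y ++ [:: b]) z n].

End Defs.

From mathcomp Require Import all_boot zify.
From Stdlib Require Import Relations.
Set Implicit Arguments. Unset Strict Implicit. Unset Printing Implicit Defensive.

(* Fix a morphism h into a finite aperiodic monoid recognizing L.  Every word
   of L factors uniquely as x a y b z with a, b the two marked letters and
   x, y, z unmarked, so L is the disjoint union of the pieces indexed by
   (a, b, h x, h y), of which there are finitely many.  Within a piece, whether
   x a y b z lies in L depends only on z, because h recognizes L and
   prepending words of equal h-value preserves h-similarity.  The unmarked
   words with a prescribed h-value, and the unmarked tails completing a given
   piece into L, are recognized by h paired with the two-element aperiodic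
   monoid ({true, false}, &&) recording whether all letters are unmarked. *)

Section Prepend.
Variable Sigma : finType.
Implicit Types (u v x y : seq Sigma) (z w : nat -> Sigma).

Lemma prepend_lt u z n : n < size u -> prepend u z n = nth (z 0) u n.
Proof. by rewrite /prepend => ->. Qed.

Lemma prepend_ge u z n : size u <= n -> prepend u z n = z (n - size u).
Proof. by rewrite /prepend ltnNge => ->. Qed.

Lemma prepend_add u z m : prepend u z (size u + m) = z m.
Proof. by rewrite prepend_ge ?leq_addr // addKn. Qed.

Lemma prepend_cat u v z : prepend (u ++ v) z =1 prepend u (prepend v z).
Proof.
move=> n; case: (ltnP n (size u)) => Hu.
  rewrite prepend_lt ?size_cat ?ltn_addr // prepend_lt // nth_cat Hu.
  exact: set_nth_default.
rewrite [RHS]prepend_ge //; case: (ltnP n (size (u ++ v))) => Huv.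
  have Hv : n - size u < size v by move: Huv; rewrite size_cat; lia.
  rewrite !prepend_lt // nth_cat ltnNge Hu /=; exact: set_nth_default.
have Hv : size v <= n - size u by move: Huv; rewrite size_cat; lia.
by rewrite !prepend_ge // size_cat subnDA.
Qed.

Lemma mkseq_prepend u z m : mkseq (prepend u z) (size u + m) = u ++ mkseq z m.
Proof.
apply: (@eq_from_nth _ (z 0)); first by rewrite size_cat !size_mkseq.
move=> i; rewrite size_mkseq => Hi; rewrite nth_mkseq // nth_cat.
case: ltnP => H; first by rewrite prepend_lt.
by rewrite prepend_ge // nth_mkseq //; lia.
Qed.

Lemma mkseqD (f : nat -> Sigma) m n :
  mkseq f (m + n) = mkseq f m ++ mkseq (fun k => f (m + k)) n.
Proof.
by rewrite /mkseq iotaD add0n map_cat -[in iota m n](addn0 m) iotaDl -map_comp.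
Qed.

Lemma prepend_mkseq w n : w =1 prepend (mkseq w n) (fun k => w (n + k)).
Proof.
move=> i; case: (ltnP i n) => H.
  by rewrite prepend_lt ?size_mkseq // nth_mkseq.
by rewrite prepend_ge ?size_mkseq // subnKC.
Qed.

Lemma mkseq_marks w p q : p < q ->
  mkseq w q.+1 =
  mkseq w p ++ w p :: mkseq (fun k => w (p.+1 + k)) (q - p.+1) ++ [:: w q].
Proof.
move=> lt_pq; have -> : q.+1 = p + (1 + ((q - p.+1) + 1)) by lia.
rewrite !mkseqD /= addn0; congr (_ ++ _ :: _ ++ _).
  by apply: eq_mkseq => k; rewrite addnA addn1.
by rewrite /mkseq /= addn0; congr [:: w _]; lia.
Qed.

Section Cancel.
Variable G : pred Sigma.

Lemma prepend_rcons_size x a z x' a' z' : all G x' -> ~~ G a ->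
  prepend (rcons x a) z =1 prepend (rcons x' a') z' -> size x' <= size x.
Proof.
move=> Gx' Ga E; rewrite leqNgt; apply/negP => lt_xx'; move/negP: Ga; apply.
have := E (size x).
rewrite prepend_lt ?size_rcons // prepend_lt ?size_rcons ?ltnS 1?ltnW //.
rewrite !nth_rcons ltnn eqxx lt_xx' => ->.
by rewrite (allP Gx') // mem_nth.
Qed.

Lemma prepend_rcons_inj x a z x' a' z' :
  all G x -> all G x' -> ~~ G a -> ~~ G a' ->
  prepend (rcons x a) z =1 prepend (rcons x' a') z' -> [/\ x = x', a = a' & z =1 z'].
Proof.
move=> Gx Gx' Ga Ga' E.
have Sxa : size (rcons x a) = size (rcons x' a').
  rewrite !size_rcons; congr _.+1; apply/eqP; rewrite eqn_leq.
  by rewrite (prepend_rcons_size Gx Ga' (fsym E)) (prepend_rcons_size Gx' Ga E).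
have /rcons_inj[-> ->] : rcons x a = rcons x' a'.
  by rewrite -[rcons x a]cats0 -[rcons x' a']cats0 -(mkseq_prepend _ z 0)
     -(mkseq_prepend _ z' 0) -Sxa addn0; apply: eq_mkseq.
by split=> // m; rewrite -(prepend_add (rcons x a) z) E Sxa prepend_add.
Qed.

Lemma prepend_marks_inj x a y b z x' a' y' b' z' :
  all G x -> all G y -> all G x' -> all G y' ->
  ~~ G a -> ~~ G b -> ~~ G a' -> ~~ G b' ->
  prepend (x ++ a :: y ++ [:: b]) z =1 prepend (x' ++ a' :: y' ++ [:: b']) z' ->
  [/\ x = x', a = a', y = y' & b = b'].
Proof.
move=> Gx Gy Gx' Gy' Ga Gb Ga' Gb' E.
have cat_rcons v c t d : v ++ c :: t ++ [:: d] = rcons v c ++ rcons t d.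
  by rewrite -!cats1 -catA.
have E' : prepend (rcons x a) (prepend (rcons y b) z) =1
          prepend (rcons x' a') (prepend (rcons y' b') z').
  by move=> n; rewrite -!prepend_cat -!cat_rcons E.
have [-> -> Eyz] := prepend_rcons_inj Gx Gx' Ga Ga' E'.
by have [-> -> _] := prepend_rcons_inj Gy Gy' Gb Gb' Eyz.
Qed.
End Cancel.
End Prepend.

Lemma all_factorsP (Sigma : finType) (P : pred Sigma) (z : nat -> Sigma) p :
  p 0 = 0 -> (forall i, p i < p i.+1) ->
  (forall k, P (z k)) <-> (forall i, all P (factor z p i)).
Proof.
move=> p0 p_incr; split=> [Pz i | Pf k]; first by apply/allP => _ /mapP[j _ ->].
have [i /andP[le_pi_k lt_k_pi1]] : exists i, p i <= k < p i.+1.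
  elim: k {Pf} => [|k [i /andP[le_ik lt_ki]]].
    by exists 0; have := p_incr 0; rewrite p0.
  have [lt_k1 | le_k1] := ltnP k.+1 (p i.+1); first by exists i; rewrite lt_k1 ltnW.
  by exists i.+1; rewrite le_k1 (leq_trans _ (p_incr i.+1)).
apply: (allP (Pf i)); apply/mapP; exists (k - p i); last by rewrite subnKC.
by rewrite mem_iota /=; lia.
Qed.

Section Similar.
Variables (Sigma : finType) (M : Type) (op : M -> M -> M) (e : M).
Variable h : seq Sigma -> M.
Implicit Types (u : seq Sigma) (z : nat -> Sigma).

Lemma eqfun_similar z z' : z =1 z' -> h_similar h z z'.
Proof.
by move=> E; exists id, id; split=> // i; congr h; apply: eq_mkseq => k; rewrite E.
Qed.

Definition cuts_after (n : nat) (p : nat -> nat) (i : nat) : nat :=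
  if i is i'.+1 then n + p i else 0.

Lemma cuts_after_incr n p : p 0 = 0 -> (forall i, p i < p i.+1) ->
  forall i, cuts_after n p i < cuts_after n p i.+1.
Proof. by move=> p0 incr [|i] /=; [have := incr 0 | have := incr i.+1]; lia. Qed.

Lemma factor_prepend0 u z p : p 0 = 0 ->
  factor (prepend u z) (cuts_after (size u) p) 0 = u ++ factor z p 0.
Proof. by move=> p0; rewrite /factor /= p0 !subn0 mkseq_prepend. Qed.

Lemma factor_prependS u z p i :
  factor (prepend u z) (cuts_after (size u) p) i.+1 = factor z p i.+1.
Proof.
by rewrite /factor /= subnDl; apply: eq_mkseq => k; rewrite -addnA prepend_add.
Qed.

Lemma recognizes_omega_similar (Q : (nat -> Sigma) -> Prop) :
  (forall z z', h_similar h z z' -> Q z' -> Q z) -> recognizes_omega h Q.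
Proof.
by move=> HQ w u Qw Huw; elim: Huw Qw => [x y /HQ | x y z _ IHxy _ IHyz]; auto.
Qed.

Hypothesis h_morph : is_morphism op e h.

Lemma prepend_similar u u' z z' : h u = h u' -> h_similar h z z' ->
  h_similar h (prepend u z) (prepend u' z').
Proof.
move=> Eu [p [q [p0 q0 p_incr q_incr Ef]]].
exists (cuts_after (size u) p), (cuts_after (size u') q); split=> //.
1,2: exact: cuts_after_incr.
case=> [|i]; last by rewrite !factor_prependS.
by rewrite !factor_prepend0 // !h_morph.2 Eu Ef.
Qed.
End Similar.

Section AllLetters.
Variables (Sigma : finType) (M : finType) (op : M -> M -> M) (e : M).
Variable h : seq Sigma -> M.
Hypotheses (op_monoid : is_monoid op e) (op_aperiodic : aperiodic_monoid op e).
Hypothesis h_morph : is_morphism op e h.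
Variable G : pred Sigma.

Definition op_all (x y : M * bool) : M * bool := (op x.1 y.1, x.2 && y.2).
Definition h_all (u : seq Sigma) : M * bool := (h u, all G u).

Lemma op_all_monoid : is_monoid op_all (e, true).
Proof.
case: op_monoid => [opA [op1x opx1]]; split; last split.
- by move=> [x c] [y d] [z f]; rewrite /op_all /= opA andbA.
- by move=> [x c]; rewrite /op_all /= op1x.
- by move=> [x c]; rewrite /op_all /= opx1 andbT.
Qed.

Lemma mpow_op_all x c k :
  mpow op_all (e, true) (x, c) k = (mpow op e x k, (k == 0) || c).
Proof.
elim: k => [|k IH] //; rewrite [LHS]/mpow iterS -/(mpow _ _ _ k) IH.
by rewrite /op_all /=; case: c {IH}; rewrite ?orbT.
Qed.

Lemma op_all_aperiodic : aperiodic_monoid op_all (e, true).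
Proof.
have [n Hn] := op_aperiodic; exists n.+1 => -[x c]; rewrite !mpow_op_all /=.
by congr (op x _, c); exact: Hn.
Qed.

Lemma h_all_morph : is_morphism op_all (e, true) h_all.
Proof.
by split=> [|u v]; rewrite /h_all ?h_morph.1 // /op_all h_morph.2 all_cat.
Qed.

Lemma aperiodic_lang_all (K : seq Sigma -> Prop) :
  recognizes h K -> aperiodic_lang (fun x => all G x /\ K x).
Proof.
move=> hK; exists (M * bool)%type, op_all, (e, true), h_all.
split; [exact: op_all_monoid | exact: op_all_aperiodic | exact: h_all_morph |].
move=> v; split=> [Kv|[u [[Gu Ku] [Ehu EGu]]]]; first by exists v.
by rewrite -EGu; split=> //; apply/hK; exists u.
Qed.

Lemma aperiodic_omega_lang_all (Q : (nat -> Sigma) -> Prop) :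
  (forall z z', h_similar h z z' -> Q z' -> Q z) ->
  aperiodic_omega_lang (fun z => (forall k, G (z k)) /\ Q z).
Proof.
move=> HQ; exists (M * bool)%type, op_all, (e, true), h_all.
split; [exact: op_all_monoid | exact: op_all_aperiodic | exact: h_all_morph |].
apply: recognizes_omega_similar => z z' [p [q [p0 q0 p_incr q_incr Ef]]] [Gz' Qz'].
split; last by apply: HQ Qz'; exists p, q; split=> // i; case: (Ef i).
apply/(all_factorsP G z p0 p_incr) => i; case: (Ef i) => _ ->.
exact: (all_factorsP G z' q0 q_incr).1 Gz' i.
Qed.
End AllLetters.

Section Decomposition.
Variables (Sigma : finType) (D D' : {set Sigma}).
Variables (M : finType) (op : M -> M -> M) (e : M) (h : seq Sigma -> M).
Hypothesis h_morph : is_morphism op e h.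
Variable L : (nat -> Sigma) -> Prop.
Hypothesis h_rec : recognizes_omega h L.
Implicit Types (x y : seq Sigma) (z w : nat -> Sigma).

Definition unmarked : pred Sigma := fun c => c \notin D :|: D'.

Definition marked_pair (ab : Sigma * Sigma) : bool :=
  (ab.1 \in D) && (ab.2 \in D') || (ab.1 \in D') && (ab.2 \in D).

Definition piece_index : finType := ({ab | marked_pair ab} * (M * M))%type.

Implicit Type t : piece_index.

Definition mark1 t : Sigma := (val t.1).1.
Definition mark2 t : Sigma := (val t.1).2.

Definition left_lang t x : Prop := all unmarked x /\ h x = t.2.1.
Definition mid_lang t y : Prop := all unmarked y /\ h y = t.2.2.
Definition tail_lang t z : Prop :=
  (forall k, unmarked (z k)) /\
  exists x y, [/\ h x = t.2.1, h y = t.2.2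
                & L (prepend (x ++ mark1 t :: y ++ [:: mark2 t]) z)].

Definition piece t : (nat -> Sigma) -> Prop :=
  concat5 (left_lang t) (mark1 t) (mid_lang t) (mark2 t) (tail_lang t).

Lemma marked_pairP t :
  (mark1 t \in D /\ mark2 t \in D') \/ (mark1 t \in D' /\ mark2 t \in D).
Proof.
case: t => [[[a b] ab_marked] ?]; rewrite /mark1 /mark2 /=.
by case/orP: ab_marked => /andP[Da Db]; [left | right].
Qed.

Lemma marks_marked t : ~~ unmarked (mark1 t) /\ ~~ unmarked (mark2 t).
Proof.
rewrite /unmarked !negbK !in_setU.
by case: (marked_pairP t) => -[-> ->]; rewrite ?orbT.
Qed.

Lemma morph_marks_congr x x' a y y' b : h x = h x' -> h y = h y' ->
  h (x ++ a :: y ++ [:: b]) = h (x' ++ a :: y' ++ [:: b]).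
Proof.
move=> Ex Ey; rewrite !h_morph.2 Ex; congr (op _ _).
change (h ([:: a] ++ y ++ [:: b]) = h ([:: a] ++ y' ++ [:: b])).
by rewrite !h_morph.2 Ey.
Qed.

Lemma piece_inj t t' w : piece t w -> piece t' w -> t = t'.
Proof.
move=> [x [y [z [[Gx hx] [Gy hy] _ Ew]]]].
move=> [x' [y' [z' [[Gx' hx'] [Gy' hy'] _ Ew']]]].
have [Ga Gb] := marks_marked t; have [Ga' Gb'] := marks_marked t'.
have [Ex Ea Ey Eb] := prepend_marks_inj Gx Gy Gx' Gy' Ga Gb Ga' Gb'
  (fun n => etrans (esym (Ew n)) (Ew' n)).
move: t t' hx hy hx' hy' Ea Eb {Ew Ew' Ga Gb Ga' Gb'}.
move=> [[[a b] ?] [? ?]] [[[a' b'] ?] [? ?]] /=.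
rewrite /mark1 /mark2 Ex Ey /= => <- <- -> -> Ea Eb; subst a' b'.
by congr (_, _); apply: val_inj.
Qed.

Lemma piece_sub t w : piece t w -> L w.
Proof.
move=> [x [y [z [[_ hx] [_ hy] [_ [x' [y' [hx' hy' Lz]]]] Ew]]]].
apply: h_rec Lz _; apply: t_trans (t_step _ _ _ _ (eqfun_similar h Ew)) _.
apply: t_step; apply: (prepend_similar h_morph _ (eqfun_similar h (frefl z))).
by apply: morph_marks_congr; rewrite ?hx ?hy.
Qed.

Lemma piece_of_marks w p q : p < q -> marked_pair (w p, w q) ->
  (forall n, n != p -> n != q -> unmarked (w n)) -> L w -> exists t, piece t w.
Proof.
move=> lt_pq marked unmarked_w Lw.
have Ew := prepend_mkseq w q.+1; rewrite (mkseq_marks _ lt_pq) in Ew.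
set x := mkseq w p in Ew; set y := mkseq _ (q - p.+1) in Ew; set z := fun k => _ in Ew.
exists (exist _ (w p, w q) marked, (h x, h y)).
have unmarked_mkseq f n : (forall k, k < n -> unmarked (w (f k))) ->
    all unmarked (mkseq (fun k => w (f k)) n).
  by move=> Hf; apply/allP => _ /mapP[k + ->]; rewrite mem_iota => /andP[_ /Hf].
exists x, y, z; split=> //.
- by split=> //; apply: (unmarked_mkseq id) => k lt_kp; apply: unmarked_w; lia.
- by split=> //; apply: unmarked_mkseq => k lt_k; apply: unmarked_w; lia.
split=> [k | ]; first by apply: unmarked_w; lia.
exists x, y; split=> //; apply: h_rec Lw _.
exact: t_step (eqfun_similar h (fsym Ew)).
Qed.

Lemma in_some_piece w : [disjoint D & D'] ->
  (exists! i, w i \in D) -> (exists! i, w i \in D') -> L w -> exists t, piece t w.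
Proof.
move=> DD' [i [Di uniqD]] [i' [Di' uniqD']].
have unmarked_w n : n != i -> n != i' -> unmarked (w n).
  move=> ne_ni ne_ni'; rewrite /unmarked in_setU negb_or.
  apply/andP; split; apply/negP.
  - by move/uniqD => E; rewrite E eqxx in ne_ni.
  - by move/uniqD' => E; rewrite E eqxx in ne_ni'.
have [lt_ii' | lt_i'i | eq_ii'] := ltngtP i i'.
- by apply: piece_of_marks lt_ii' _ unmarked_w; rewrite /marked_pair Di Di'.
- apply: piece_of_marks lt_i'i _ _; last by move=> n ne_ni' ne_ni; apply: unmarked_w.
  by rewrite /marked_pair Di Di' orbT.
by move: Di'; rewrite -eq_ii' (disjointFr DD' Di).
Qed.

Section Aperiodic.
Hypotheses (op_monoid : is_monoid op e) (op_aperiodic : aperiodic_monoid op e).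

Lemma recognizes_fiber (s : M) : recognizes h (fun x => h x = s).
Proof. by move=> v; split=> [hv | [u [<- ->]]]; first by exists v. Qed.

Lemma left_lang_aperiodic t : aperiodic_lang (left_lang t).
Proof. exact: aperiodic_lang_all op_monoid op_aperiodic h_morph _ _ (recognizes_fiber _).
Qed.

Lemma mid_lang_aperiodic t : aperiodic_lang (mid_lang t).
Proof. exact: aperiodic_lang_all op_monoid op_aperiodic h_morph _ _ (recognizes_fiber _).
Qed.

Lemma tail_lang_aperiodic t : aperiodic_omega_lang (tail_lang t).
Proof.
apply: (aperiodic_omega_lang_all op_monoid op_aperiodic h_morph unmarked).
move=> z z' sim_zz' [x [y [hx hy Lz']]]; exists x, y; split=> //; apply: h_rec Lz' _.
exact: t_step (prepend_similar h_morph (erefl _) sim_zz').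
Qed.
End Aperiodic.
End Decomposition.

Theorem mainTheorem7 (Sigma : finType) (D D' : {set Sigma})
  (L : (nat -> Sigma) -> Prop) :
  [disjoint D & D'] ->
  aperiodic_omega_lang L ->
  (forall w, L w -> (exists! i, w i \in D) /\ (exists! i, w i \in D')) ->
  exists (n : nat) (Rl Rm : 'I_n -> seq Sigma -> Prop) (a b : 'I_n -> Sigma)
         (Rr : 'I_n -> (nat -> Sigma) -> Prop),
    [/\ (forall j, (a j \in D /\ b j \in D') \/ (a j \in D' /\ b j \in D))
        /\ (forall j x, Rl j x -> all (fun c => c \notin D :|: D') x),
        (forall j x, Rm j x -> all (fun c => c \notin D :|: D') x)
        /\ (forall j z, Rr j z -> forall k, z k \notin D :|: D'),
        forall j, [/\ aperiodic_lang (Rl j), aperiodic_lang (Rm j)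
                    & aperiodic_omega_lang (Rr j)],
        forall j k w, j != k ->
          concat5 (Rl j) (a j) (Rm j) (b j) (Rr j) w ->
          ~ concat5 (Rl k) (a k) (Rm k) (b k) (Rr k) w
      & forall w, L w <-> exists j, concat5 (Rl j) (a j) (Rm j) (b j) (Rr j) w].
Proof.
move=> DD' [M [op [e [h [op_monoid op_aperiodic h_morph h_rec]]]]] L_marks.
exists #|piece_index D D' M|,
  (fun j => left_lang h (enum_val j)), (fun j => mid_lang h (enum_val j)),
  (fun j => mark1 (enum_val j)), (fun j => mark2 (enum_val j)),
  (fun j => tail_lang h L (enum_val j)).
split.
- by split=> [j | j x []] //; apply: marked_pairP.
- by split=> [j x [] | j z []].
- move=> j; split.
  + exact: (left_lang_aperiodic h_morph op_monoid op_aperiodic).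
  + exact: (mid_lang_aperiodic h_morph op_monoid op_aperiodic).
  + exact: (tail_lang_aperiodic h_morph h_rec op_monoid op_aperiodic).
- move=> j k w /eqP ne_jk piece_j piece_k; apply: ne_jk; apply: enum_val_inj.
  exact: piece_inj piece_j piece_k.
move=> w; split=> [Lw | [j piece_j]]; last exact: (piece_sub h_morph h_rec piece_j).
have [uniqD uniqD'] := L_marks w Lw.
have [s piece_s] := in_some_piece h_rec DD' uniqD uniqD' Lw.
by exists (enum_rank s); rewrite enum_rankK.
Qed.
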